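(* In every execution of the protocol Fever, let $v$ be an initial view and let $\mathtt t$ be the first time at which any correct processor enters a view $\ge v$. Then: (i) some correct processor enters view $v$ at time $\mathtt t$; (ii) no correct processor enters any view $v'>v$ at time $\mathtt t$; (iii) $c(p)\le\mathtt c_v$ for every correct processor $p$ at time $\mathtt t$.
   Context: Model. There is a set $\Pi=\{p_0,\dots,p_{n-1}\}$ of $n$ processors, and $t$ is the largest integer $<n/3$. At most $t$ processors are Byzantine (arbitrary behaviour); the others are correct. Authenticated channels, unforgeable signatures and threshold signatures are assumed. Partial synchrony holds with a known $\Delta$ and an unknown $GST$. Each processor $p$ has a local clock $c(p)$. All clocks advance at the same rate as real time, except when the protocol forwards them. Partial initial clock synchronisation holds: for every correct $p$, at the start at least $t+1$ correct processors $p'$ satisfy $c(p')\ge c(p)-\Gamma$, for a known $\Gamma\ge2\Delta$. Underlying protocol. Views $v\in\mathbb N_{\ge0}$; a fixed integer $k\ge3$; $\mathtt{lead}(v)=p_i$ with $i=\lfloor v/k\rfloor\bmod n$; $v$ is initial iff $v\bmod k=0$. A quorum certificate (QC) for view $v$ is a threshold signature of $n-t$ distinct processors, and a correct processor contributes to a QC for view $v$ only while in view $v$. Protocol Fever. Set $\mathtt c_v=\Gamma v$. Each correct processor $p$ keeps a current view (initially $0$) and behaves as follows. (a) When $c(p)=\mathtt c_v$ for an initial view $v$, $p$ enters view $v$ and sends a $\mathtt{view}\ v$ message (the value $v$ signed by $p$) to $\mathtt{lead}(v)$. (b) Upon first seeing a QC for a view $v'$ at least its current view, $p$ enters view $v'+1$,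 and if $c(p)<\mathtt c_{v'+1}$ it sets $c(p):=\mathtt c_{v'+1}$. (c) Upon first seeing a view certificate (VC) for an initial view $v'$ greater than its current view, $p$ enters view $v'$, and if $c(p)<\mathtt c_{v'}$ it sets $c(p):=\mathtt c_{v'}$. (d) If $p=\mathtt{lead}(v')$ for some $v'$ at least its current view, then upon first receiving $\mathtt{view}\ v'$ messages from $t+1$ distinct processors, $p$ combines them into a threshold signature, the VC for view $v'$, and sends it to all processors (including itself). *)

From mathcomp Require Import all_boot.
From Stdlib Require Import Reals.

Set Implicit Arguments.
Unset Strict Implicit.
Unset Printing Implicit Defensive.

(* t = the largest integer < n/3 (for n >= 1). *)
Definition tf (n : nat) : nat := (n.-1 %/ 3)%N.

Definition cv (Gamma : R) (v : nat) : R := (Gamma * INR v)%R.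

Definition initial (k v : nat) : Prop := (v %% k = 0)%N.

(* Global state of an execution.  Byzantine components of per-processor
   fields are meaningless (never constrained). *)
Record State (n : nat) := mkState {
  now     : R;
  clk     : 'I_n -> R;
  cur     : 'I_n -> nat;
  started : 'I_n -> bool;
  fired   : 'I_n -> nat -> bool;    (* rule (a) already executed for (p,v) *)
  viewSig : 'I_n -> nat -> option R;(* time q first signed "view v" *)
  voteSig : 'I_n -> nat -> option R;(* time q first contributed to a QC for v *)
  seenQC  : 'I_n -> nat -> bool;
  seenVC  : 'I_n -> nat -> bool
}.

Inductive label (n : nat) :=
| Silent
| Enter of 'I_n & nat.

Arguments Silent {n}.

Definition upd (n : nat) (A : Type) (f : 'I_n -> A) (p : 'I_n) (a : A) :=
  fun q => if q == p then a else f q.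

Definition upd2 (n : nat) (A : Type) (f : 'I_n -> nat -> A) (p : 'I_n) (v : nat)
  (a : A) :=
  fun q w => if (q == p) && (w == v) then a else f q w.

Definition sign (n : nat) (sg : 'I_n -> nat -> option R) (p : 'I_n) (v : nat)
  (tau : R) :=
  upd2 sg p v (match sg p v with Some x => Some x | None => Some tau end).

Definition signed_before (n : nat) (sg : 'I_n -> nat -> option R) (q : 'I_n)
  (v : nat) (tau : R) : Prop :=
  match sg q v with Some x => (x < tau)%R | None => False end.

(* A certificate (threshold signature) for view v built from [m] distinct
   signers is available at time tau when m distinct processors signed
   (strictly) before tau. *)
Definition cert_avail (n : nat) (sg : 'I_n -> nat -> option R) (m v : nat)
  (tau : R) : Prop :=
  exists S : {set 'I_n}, (m <= #|S|)%N /\ forall q, q \in S -> signed_before sg q v tau.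

Section Fever.
Variables (n k : nat) (Gamma : R) (B : {set 'I_n}).


Definition QC_avail (s : State n) (v : nat) : Prop :=
  cert_avail (voteSig s) (n - tf n) v (now s).

Definition VC_avail (s : State n) (v : nat) : Prop :=
  cert_avail (viewSig s) (tf n).+1 v (now s).

Definition set_clk (s : State n) (c : 'I_n -> R) : State n :=
  mkState (now s) c (cur s) (started s) (fired s) (viewSig s) (voteSig s)
    (seenQC s) (seenVC s).

Definition tick (s : State n) (d : R) : State n :=
  mkState (now s + d)%R (fun q => clk s q + d)%R (cur s) (started s) (fired s)
    (viewSig s) (voteSig s) (seenQC s) (seenVC s).

Definition enter (s : State n) (p : 'I_n) (w : nat) (c : R) : State n :=
  mkState (now s) (upd (clk s) p (Rmax (clk s p) c)) (upd (cur s) p w)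
    (upd (started s) p true) (fired s) (viewSig s) (voteSig s)
    (seenQC s) (seenVC s).

Definition correct (p : 'I_n) : Prop := p \notin B.

Inductive step : State n -> label n -> State n -> Prop :=
(* time passes; it may not skip past (or leave pending) a time-triggered
   event of rule (a) of a correct processor *)
| StTick s d :
    (0 <= d)%R ->
    (forall p w, correct p -> initial k w ->
        ~ (clk s p = cv Gamma w /\ fired s p w = false)) ->
    (forall p w, correct p -> initial k w ->
        ~ (clk s p < cv Gamma w < clk s p + d)%R) ->
    step s Silent (tick s d)
(* rule (a): c(p) = c_w for initial w: enter w and send (sign) "view w" *)
| StTimer s p w :
    correct p -> initial k w -> clk s p = cv Gamma w -> fired s p w = false ->
    step s (Enter p w)
      (mkState (now s) (clk s) (upd (cur s) p w) (upd (started s) p true)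
         (upd2 (fired s) p w true) (sign (viewSig s) p w (now s)) (voteSig s)
         (seenQC s) (seenVC s))
(* underlying protocol: a correct processor contributes to a QC only for its
   current view, and only once it is in a view *)
| StVote s p :
    correct p -> started s p ->
    step s Silent
      (mkState (now s) (clk s) (cur s) (started s) (fired s) (viewSig s)
         (sign (voteSig s) p (cur s p) (now s)) (seenQC s) (seenVC s))
| StByzView s q w :
    q \in B ->
    step s Silent
      (mkState (now s) (clk s) (cur s) (started s) (fired s)
         (sign (viewSig s) q w (now s)) (voteSig s) (seenQC s) (seenVC s))
| StByzVote s q w :
    q \in B ->
    step s Silent
      (mkState (now s) (clk s) (cur s) (started s) (fired s) (viewSig s)
         (sign (voteSig s) q w (now s)) (seenQC s) (seenVC s))
(* rule (b): first sight of a QC for w >= current view: enter w+1 *)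
| StQCEnter s p w :
    correct p -> seenQC s p w = false -> QC_avail s w -> (cur s p <= w)%N ->
    step s (Enter p w.+1)
      (let s1 := enter s p w.+1 (cv Gamma w.+1) in
       mkState (now s1) (clk s1) (cur s1) (started s1) (fired s1) (viewSig s1)
         (voteSig s1) (upd2 (seenQC s1) p w true) (seenVC s1))
| StQCIgnore s p w :
    correct p -> seenQC s p w = false -> QC_avail s w -> (w < cur s p)%N ->
    step s Silent
      (mkState (now s) (clk s) (cur s) (started s) (fired s) (viewSig s)
         (voteSig s) (upd2 (seenQC s) p w true) (seenVC s))
(* rule (c)/(d): first sight of a VC for initial w > current view: enter w *)
| StVCEnter s p w :
    correct p -> initial k w -> seenVC s p w = false -> VC_avail s w ->
    (cur s p < w)%N ->
    step s (Enter p w)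
      (let s1 := enter s p w (cv Gamma w) in
       mkState (now s1) (clk s1) (cur s1) (started s1) (fired s1) (viewSig s1)
         (voteSig s1) (seenQC s1) (upd2 (seenVC s1) p w true))
| StVCIgnore s p w :
    correct p -> initial k w -> seenVC s p w = false -> VC_avail s w ->
    (w <= cur s p)%N ->
    step s Silent
      (mkState (now s) (clk s) (cur s) (started s) (fired s) (viewSig s)
         (voteSig s) (seenQC s) (upd2 (seenVC s) p w true)).

Definition init_state (s : State n) : Prop :=
  now s = 0%R /\
  (forall p, correct p -> (clk s p <= 0)%R) /\
  (forall p, correct p -> exists S : {set 'I_n}, ((tf n).+1 <= #|S|)%N /\
       forall q, q \in S -> correct q /\ (clk s p - Gamma <= clk s q)%R) /\
  (forall p, cur s p = 0%N) /\ (forall p, started s p = false) /\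
  (forall p w, fired s p w = false) /\
  (forall p w, viewSig s p w = None) /\ (forall p w, voteSig s p w = None) /\
  (forall p w, seenQC s p w = false) /\ (forall p w, seenVC s p w = false).

Definition execution (s : nat -> State n) (lab : nat -> label n) : Prop :=
  init_state (s 0%N) /\ forall i, step (s i) (lab i) (s i.+1).

Definition enters (s : nat -> State n) (lab : nat -> label n) (p : 'I_n)
  (w : nat) (tau : R) : Prop :=
  exists i, lab i = Enter p w /\ now (s i) = tau.

Definition first_entry_time (s : nat -> State n) (lab : nat -> label n)
  (v : nat) (tau : R) : Prop :=
  (exists p w, correct p /\ (v <= w)%N /\ enters s lab p w tau) /\
  (forall p w tau', correct p -> (v <= w)%N -> enters s lab p w tau' -> (tau <= tau')%R).

End Fever.

(* Every
   signature of a correct processor for a view w was produced after it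
   entered w; a certificate (QC with n - t signers, VC with t + 1 signers)
   always has a correct signer since |B| <= t.  Hence, up to time t no QC
   and no VC for a view >= v is available.  By induction over the steps of
   the execution, up to time t every correct clock stays <= c_v: ticks
   cannot pass c_v (rule (a) would fire first, and after it fires it is
   already time t), and clock forwarding only goes to c_w for a view w whose
   certificate is available, so w <= v.  Finally an entry into w > v at time
   <= t would need either a clock at c_w > c_v (rule (a)) or a certificate
   for a view >= v (rules (b), (c)); so the entry at time t is into v. *)
From mathcomp Require Import all_boot.
From Stdlib Require Import Reals Lra Lia.
From mathcomp Require Import zify.

Set Implicit Arguments.
Unset Strict Implicit.

Lemma cv_le Gamma w v : (0 <= Gamma)%R -> (w <= v)%N -> (cv Gamma w <= cv Gamma v)%R.
Proof.
by move=> HG /leP Hwv; rewrite /cv; apply: Rmult_le_compat_l => //; apply: le_INR.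
Qed.

Lemma cv_lt Gamma w v : (0 < Gamma)%R -> (w < v)%N -> (cv Gamma w < cv Gamma v)%R.
Proof.
by move=> HG /ltP Hwv; rewrite /cv; apply: Rmult_lt_compat_l => //; apply: lt_INR.
Qed.

Lemma cert_correct_signer n (B : {set 'I_n}) (sg : 'I_n -> nat -> option R)
    m w tau :
  (#|B| < m)%N -> cert_avail sg m w tau ->
  exists2 q, correct B q & signed_before sg q w tau.
Proof.
move=> HBm [S [HmS HS]].
have /subsetPn [q qS qB] : ~~ (S \subset B).
  by apply/negP => /subset_leq_card; lia.
by exists q => //; apply: HS.
Qed.

Ltac case_updates :=
  unfold sign, upd2, upd in *;
  repeat match goal with
  | H : context[if ?c then _ else _] |- _ => let E := fresh "E" in destruct c eqn:E
  | |- context[if ?c then _ else _] => let E := fresh "E" in destruct c eqn:E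
  end;
  repeat match goal with
  | H : (_ && _) = true |- _ => move/andP: H => [? ?]
  | H : (_ == _) = true |- _ => move/eqP: H => ?
  | H : is_true (_ == _) |- _ => move/eqP: H => ?
  end; subst.

Ltac byzantine_absurd :=
  match goal with
  | h : is_true (_ \in _), h' : correct _ _ |- _ => by rewrite /correct h in h'
  end.

Section OneStep.
Variables (n k : nat) (Gamma : R) (B : {set 'I_n}).
Implicit Types (a b : State n) (l : label n).

Lemma step_now_mono a l b : step k Gamma B a l b -> (now a <= now b)%R.
Proof. by case=> *; rewrite /=; lra. Qed.

Lemma step_fired_origin a l b p w :
  step k Gamma B a l b -> fired b p w -> fired a p w \/ l = Enter p w.
Proof. by case; intros; simpl in *; case_updates; auto. Qed.

Lemma step_started_origin a l b p :
  step k Gamma B a l b -> started b p ->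
  (started a p /\ cur b p = cur a p) \/ l = Enter p (cur b p).
Proof. by case; intros; simpl in *; case_updates; auto. Qed.

Lemma step_viewSig_origin a l b p w x :
  step k Gamma B a l b -> correct B p -> viewSig b p w = Some x ->
  viewSig a p w = Some x \/ (l = Enter p w /\ x = now a).
Proof.
case; intros; simpl in *; case_updates; auto; try byzantine_absurd.
all: by destruct (viewSig _ _ _); [left | right; split]; congruence.
Qed.

Lemma step_voteSig_origin a l b p w x :
  step k Gamma B a l b -> correct B p -> voteSig b p w = Some x ->
  voteSig a p w = Some x \/ [/\ started a p, cur a p = w & x = now a].
Proof.
case; intros; simpl in *; case_updates; auto; try byzantine_absurd.
all: by destruct (voteSig _ _ _); [left | right; split]; congruence.
Qed.

Lemma step_clock_bound a l b v t :
  step k Gamma B a l b -> initial k v -> (0 < Gamma)%R ->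
  (forall p, correct B p -> fired a p v -> (t <= now a)%R) ->
  (forall w, (v <= w)%N -> ~ QC_avail a w) ->
  (forall w, (v <= w)%N -> initial k w -> ~ VC_avail a w) ->
  (now b <= t)%R ->
  (forall p, correct B p -> (clk a p <= cv Gamma v)%R) ->
  forall p, correct B p -> (clk b p <= cv Gamma v)%R.
Proof.
move=> st Hv HG Hfired Hqc Hvc Hbt Hclk p Hp.
case: st Hfired Hqc Hvc Hbt Hclk; try by intros; apply: Hclk.
- move=> {}a d _ Hpending Hskip Hfired _ _ /= Hbt Hclk /=.
  apply: Rnot_lt_le => Hover.
  have [Hlt | Heq] := Rle_lt_or_eq_dec _ _ (Hclk p Hp).
  + by apply: (Hskip p v Hp Hv); lra.
  + case Ef: (fired a p v); last by apply: (Hpending p v Hp Hv).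
    by have := Hfired p Hp Ef; lra.
- move=> {}a q w Hq _ HQ _ _ Hqc _ _ Hclk /=; rewrite /upd.
  case: ifP => _; last by apply: Hclk.
  apply: Rmax_lub; first by apply: Hclk.
  apply: cv_le; first lra.
  by rewrite leqNgt; apply/negP => Hvw; apply: (Hqc w Hvw).
- move=> {}a q w Hq Hw _ HV _ _ _ Hvc _ Hclk /=; rewrite /upd.
  case: ifP => _; last by apply: Hclk.
  apply: Rmax_lub; first by apply: Hclk.
  apply: cv_le; first lra.
  by rewrite leqNgt; apply/negP => /ltnW Hvw; apply: (Hvc w Hvw Hw).
Qed.

Lemma step_entry_above a l b p w v :
  step k Gamma B a l b -> l = Enter p w -> (v < w)%N -> (0 < Gamma)%R ->
  (clk a p <= cv Gamma v)%R ->
  (forall u, (v <= u)%N -> ~ QC_avail a u) ->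
  (forall u, (v <= u)%N -> initial k u -> ~ VC_avail a u) ->
  False.
Proof.
move=> st El Hvw HG Hclk Hqc Hvc.
case: st El Hvw Hclk Hqc Hvc => // [{}a q w' _ _ Hc _ [<- <-] Hvw Hclk _ _
                                   |{}a q w' _ _ HQ _ [_ <-] Hvw _ Hqc _
                                   |{}a q w' _ Hi _ HV _ [_ <-] Hvw _ _ Hvc].
- by have := cv_lt HG Hvw; lra.
- by apply: (Hqc w' Hvw).
- by apply: (Hvc w' (ltnW Hvw) Hi).
Qed.

End OneStep.

Section Execution.
Variables (n k : nat) (Gamma : R) (B : {set 'I_n}).
Variables (s : nat -> State n) (lab : nat -> label n).
Hypothesis Hexec : execution k Gamma B s lab.

Let Hinit : init_state Gamma B (s 0) := Hexec.1.
Let Hstep i : step k Gamma B (s i) (lab i) (s i.+1) := Hexec.2 i.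

Lemma now_mono j i : (j <= i)%N -> (now (s j) <= now (s i))%R.
Proof.
elim: i => [|i IH] Hji; first by move: Hji; rewrite leqn0 => /eqP ->; lra.
case: (ltngtP j i.+1) Hji => // [Hj _|-> _]; last lra.
by have := IH Hj; have := step_now_mono (Hstep i); lra.
Qed.

Lemma fired_entered i p w :
  fired (s i) p w -> exists2 j, (j < i)%N & lab j = Enter p w.
Proof.
elim: i p w => [|i IH] p w Hf; first by move: Hf; case: Hinit => _ [_ [_ [_ [_ [-> _]]]]].
case: (step_fired_origin (Hstep i) Hf) => [/IH [j Hj Ej] | Ei].
- by exists j => //; lia.
- by exists i.
Qed.

Lemma started_entered i p :
  started (s i) p -> exists2 j, (j < i)%N & lab j = Enter p (cur (s i) p).
Proof.
elim: i p => [|i IH] p Hs; first by move: Hs; case: Hinit => _ [_ [_ [_ [-> _]]]].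
case: (step_started_origin (Hstep i) Hs) => [[/IH [j Hj Ej] ->] | Ei].
- by exists j => //; lia.
- by exists i.
Qed.

Lemma viewSig_entered i p w x :
  correct B p -> viewSig (s i) p w = Some x ->
  exists j, [/\ (j < i)%N, lab j = Enter p w & (now (s j) <= x)%R].
Proof.
move=> Hp; elim: i x => [|i IH] x Hx.
  by move: Hx; case: Hinit => _ [_ [_ [_ [_ [_ [-> _]]]]]].
case: (step_viewSig_origin (Hstep i) Hp Hx) => [/IH [j [Hj Ej Hjx]] | [Ei ->]].
- by exists j; split => //; lia.
- by exists i; split => //; lra.
Qed.

Lemma voteSig_entered i p w x :
  correct B p -> voteSig (s i) p w = Some x ->
  exists j, [/\ (j < i)%N, lab j = Enter p w & (now (s j) <= x)%R].
Proof.
move=> Hp; elim: i x => [|i IH] x Hx.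
  by move: Hx; case: Hinit => _ [_ [_ [_ [_ [_ [_ [-> _]]]]]]].
case: (step_voteSig_origin (Hstep i) Hp Hx) => [/IH [j [Hj Ej Hjx]] | [Hs Ecur ->]].
- by exists j; split => //; lia.
- case: (started_entered Hs) => j Hj; rewrite Ecur => Ej.
  by exists j; split => //; [lia | apply: now_mono; lia].
Qed.

Variables (v : nat) (t : R).
Hypothesis no_early_entry : forall j p w,
  correct B p -> (v <= w)%N -> lab j = Enter p w -> (t <= now (s j))%R.
Hypothesis Hn : (0 < n)%N.
Hypothesis HB : (#|B| <= tf n)%N.

(* Certificates for views >= v only become available strictly after t,
   since each has a correct signer, who entered that view before signing. *)
Lemma QC_late i w : (v <= w)%N -> QC_avail (s i) w -> (t < now (s i))%R.
Proof.
move=> Hvw HQ.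
have HBm : (#|B| < n - tf n)%N by move: HB; rewrite /tf; lia.
case: (cert_correct_signer HBm HQ) => q Hq.
rewrite /signed_before; case Ex: (voteSig (s i) q w) => [x|] // Hxi.
case: (voteSig_entered Hq Ex) => j [_ Ej Hjx].
by have := no_early_entry Hq Hvw Ej; lra.
Qed.

Lemma VC_late i w : (v <= w)%N -> VC_avail (s i) w -> (t < now (s i))%R.
Proof.
move=> Hvw HV.
case: (cert_correct_signer (leq_ltn_trans HB (ltnSn _)) HV) => q Hq.
rewrite /signed_before; case Ex: (viewSig (s i) q w) => [x|] // Hxi.
case: (viewSig_entered Hq Ex) => j [_ Ej Hjx].
by have := no_early_entry Hq Hvw Ej; lra.
Qed.

Hypothesis Hv : initial k v.
Hypothesis HGamma : (0 < Gamma)%R.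

Lemma clocks_bounded i p :
  (now (s i) <= t)%R -> correct B p -> (clk (s i) p <= cv Gamma v)%R.
Proof.
elim: i p => [|i IH] p Hit Hp.
  have : (0 <= cv Gamma v)%R by apply: Rmult_le_pos; [lra | apply: pos_INR].
  by have := proj1 (proj2 Hinit) p Hp; lra.
have Hi : (now (s i) <= t)%R by have := step_now_mono (Hstep i); lra.
apply: (step_clock_bound (Hstep i) Hv HGamma _ _ _ Hit) => //.
- move=> q Hq /fired_entered [j Hj Ej].
  by have := no_early_entry Hq (leqnn v) Ej; have := now_mono (ltnW Hj); lra.
- by move=> w Hvw /(QC_late Hvw); lra.
- by move=> w Hvw _ /(VC_late Hvw); lra.
- by move=> q Hq; apply: IH.
Qed.

Lemma no_entry_above p w tau :
  correct B p -> (v < w)%N -> enters s lab p w tau -> (tau <= t)%R -> False.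
Proof.
move=> Hp Hvw [j [Ej <-]] Hjt.
apply: (step_entry_above (Hstep j) Ej Hvw HGamma (clocks_bounded Hjt Hp)).
- by move=> w' Hvw' /(QC_late Hvw'); lra.
- by move=> w' Hvw' _ /(VC_late Hvw'); lra.
Qed.

End Execution.

Theorem lemma2 (n k : nat) (Gamma Delta : R) (B : {set 'I_n})
  (Hn : (0 < n)%N) (Hk : (3 <= k)%N)
  (HDelta : (0 < Delta)%R) (HGamma : (2 * Delta <= Gamma)%R)
  (HB : (#|B| <= tf n)%N)
  (s : nat -> State n) (lab : nat -> label n)
  (Hexec : execution k Gamma B s lab)
  (v : nat) (Hv : initial k v) (t : R)
  (Hfirst : first_entry_time B s lab v t) :
  (exists p, correct B p /\ enters s lab p v t) /\
  (forall p w, correct B p -> (v < w)%N -> ~ enters s lab p w t) /\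
  (forall i p, correct B p -> now (s i) = t -> (clk (s i) p <= cv Gamma v)%R).
Proof.
have HG : (0 < Gamma)%R by lra.
case: Hfirst => [[p [w [Hp [Hvw Hent]]]] Hmin].
have no_early j q w' : correct B q -> (v <= w')%N -> lab j = Enter q w' ->
    (t <= now (s j))%R.
  by move=> Hq Hw' Ej; apply: (Hmin q w') => //; exists j.
have no_above q w' : correct B q -> (v < w')%N -> ~ enters s lab q w' t.
  by move=> Hq Hw' He; apply: (no_entry_above Hexec no_early Hn HB Hv HG Hq Hw' He); lra.
split; [|split] => //.
- exists p; split => //.
  have [Hlt | Hwv | ->] := ltngtP v w; last done.
  + by case: (no_above p w Hp Hlt Hent).
  + by move: Hvw; rewrite leqNgt Hwv.
- by move=> i q Hq Hit; apply: (clocks_bounded Hexec no_early Hn HB Hv HG) => //; lra.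
Qed.
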